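(* Let $a\in\mathbb{C}$ with $|a-\tfrac14|<\tfrac14$, and let $\varphi(z)=az^2+(1-2a)z+a$. Then the iterates $\varphi_n$ converge to the constant $1$ uniformly on all of $\mathbb{D}$, i.e. $\lim_{n\to\infty}\sup_{z\in\mathbb{D}}|\varphi_n(z)-1|=0$.
   Context: $\mathbb{D}$ is the open unit disk. $\varphi_n$ denotes the $n$-th iterate $\varphi\circ\cdots\circ\varphi$ ($n$ times). Such $\varphi$ is an analytic self-map of $\mathbb{D}$ with $\varphi(1)=1$, $\varphi'(1)=1$. *)

From Stdlib Require Import Reals.
From Coquelicot Require Import Coquelicot.
Open Scope R_scope.

Definition phi (a : C) (z : C) : C :=
  (a * z * z + (1 - 2 * a) * z + a)%C.

Fixpoint iter_fun (f : C -> C) (n : nat) (z : C) : C :=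
  match n with
  | O => z
  | S m => f (iter_fun f m z)
  end.

(* With x = 1/(1 - z), the substitution z = 1 - 1/x conjugates phi to
   psi(x) = x^2/(x - a) = x + a x/(x - a) and maps the unit disk onto the
   half-plane Re x > 1/2.  When |a - 1/4| < 1/4, on that half-plane
   Re (a x/(x - a)) stays above a positive constant delta, so after n steps
   Re x_n >= n delta and |phi_n(z) - 1| = 1/|x_n| <= 1/(n delta), uniformly in z. *)

From Stdlib Require Import Reals Lra Lia Psatz.
From Coquelicot Require Import Coquelicot.
Open Scope R_scope.

Definition psi (a x : C) : C := (x * x / (x - a))%C.

Definition drift (a : C) : R := (Re a - 2 * Cmod a ^ 2) / (2 + 8 * Cmod a ^ 2).

Lemma Cmod_sub_RtoC_lt_sq (a : C) (r : R) :
  Cmod (a - RtoC r)%C < r -> Cmod a ^ 2 < 2 * r * Re a.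
Proof.
intros Hlt.
assert (Hsq : Cmod (a - RtoC r)%C ^ 2 < r ^ 2).
{ pose proof (Cmod_ge_0 (a - RtoC r)%C). nra. }
rewrite Cmod2_alt in Hsq |- *.
destruct a as [al be]; unfold Re, Im in *; simpl in *. nra.
Qed.

Lemma Re_inv_one_sub_gt_half (z : C) : Cmod z < 1 -> 1/2 < Re (/ (1 - z))%C.
Proof.
intros Hz.
assert (Hz2 : Re z ^ 2 + Im z ^ 2 < 1).
{ rewrite <- Cmod2_alt. pose proof (Cmod_ge_0 z). nra. }
destruct z as [z1 z2]; cbn [Re Im fst snd] in Hz2.
assert (Hd : 0 < (1 - z1) ^ 2 + z2 ^ 2) by nra.
replace (Re (/ (1 - (z1, z2)))%C) with ((1 - z1) / ((1 - z1) ^ 2 + z2 ^ 2))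
  by (unfold Cinv, Cminus, Cplus, Copp; simpl; field; nra).
apply Rmult_lt_reg_r with ((1 - z1) ^ 2 + z2 ^ 2); [lra|].
replace ((1 - z1) / ((1 - z1) ^ 2 + z2 ^ 2) * ((1 - z1) ^ 2 + z2 ^ 2))
  with (1 - z1) by (field; lra).
nra.
Qed.

Lemma Cmod_inv_le_inv_Re (x : C) : 0 < Re x -> Cmod (/ x)%C <= / Re x.
Proof.
intros Hx.
assert (Hx0 : x <> 0%C) by (intros ->; simpl in Hx; lra).
rewrite Cmod_inv by exact Hx0.
apply Rinv_le_contravar; [exact Hx|].
apply Rle_trans with (Rabs (Re x)); [apply Rle_abs | apply re_le_Cmod].
Qed.

Lemma Cminus_neq_0 (x a : C) : x <> a -> (x - a)%C <> 0%C.
Proof. intros Hxa H. apply Hxa. rewrite <- (Cplus_0_l a), <- H. ring. Qed.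

Lemma phi_conj_psi (a x : C) :
  x <> 0%C -> x <> a -> phi a (1 - / x)%C = (1 - / psi a x)%C.
Proof.
intros Hx Hxa.
pose proof (Cminus_neq_0 x a Hxa).
unfold phi, psi. field. auto.
Qed.

Lemma Re_psi (a x : C) : x <> a ->
  Re (psi a x) = Re x + (Cmod x ^ 2 * Re a - Cmod a ^ 2 * Re x) / Cmod (x - a)%C ^ 2.
Proof.
intros Hxa.
assert (Hd : 0 < Cmod (x - a)%C ^ 2).
{ apply pow_lt, Cmod_gt_0, Cminus_neq_0, Hxa. }
rewrite !Cmod2_alt in *.
destruct x as [u v], a as [al be]; unfold psi, Re, Im in *; simpl in *.
unfold Cdiv, Cmult, Cinv, Cminus, Cplus, Copp; simpl.
field. nra.
Qed.

(* Here t, m, d stand for |x|^2, |a|^2, |x - a|^2 and u for Re x. *)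
Lemma drift_ratio_ge (t m d al u : R) :
  1/4 < t -> u <= 2 * t -> 0 < d -> d <= 2 * t + 2 * m -> 0 <= m -> 2 * m < al ->
  (al - 2 * m) / (2 + 8 * m) <= (t * al - m * u) / d.
Proof.
intros Ht Hu Hd Hdt Hm Hal.
apply Rle_trans with ((al - 2 * m) * t / d).
- unfold Rdiv. rewrite Rmult_assoc.
  apply Rmult_le_compat_l; [lra|].
  apply Rmult_le_reg_r with ((2 + 8 * m) * d); [nra|].
  replace (/ (2 + 8 * m) * ((2 + 8 * m) * d)) with d by (field; lra).
  replace (t * / d * ((2 + 8 * m) * d)) with ((2 + 8 * m) * t) by (field; lra).
  nra.
- unfold Rdiv. apply Rmult_le_compat_r; [apply Rlt_le, Rinv_0_lt_compat, Hd|]. nra.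
Qed.

Section Drift.

Variable a : C.
Hypothesis Ha : Cmod a ^ 2 < Re a / 2.

Lemma Re_a_lt_half : Re a < 1/2.
Proof. pose proof (Cmod2_alt a). pose proof (pow2_ge_0 (Im a)). nra. Qed.

Lemma drift_pos : 0 < drift a.
Proof.
unfold drift. pose proof (pow2_ge_0 (Cmod a)).
apply Rdiv_lt_0_compat; lra.
Qed.

Lemma half_plane_avoids (x : C) : 1/2 < Re x -> x <> 0%C /\ x <> a.
Proof.
intros Hx. pose proof Re_a_lt_half.
split; intros ->; simpl in Hx; lra.
Qed.

Lemma Re_psi_ge (x : C) : 1/2 < Re x -> Re x + drift a <= Re (psi a x).
Proof.
intros Hx.
destruct (half_plane_avoids x Hx) as [_ Hxa].
rewrite Re_psi by exact Hxa.
apply Rplus_le_compat_l.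
assert (Hux : Re x ^ 2 <= Cmod x ^ 2) by (rewrite Cmod2_alt; pose proof (pow2_ge_0 (Im x)); lra).
assert (Hpar : Cmod (x - a)%C ^ 2 <= 2 * Cmod x ^ 2 + 2 * Cmod a ^ 2).
{ rewrite !Cmod2_alt. destruct x as [u v], a as [al be]; simpl.
  pose proof (pow2_ge_0 (u + al)). pose proof (pow2_ge_0 (v + be)). nra. }
assert (Hd : 0 < Cmod (x - a)%C ^ 2) by apply pow_lt, Cmod_gt_0, Cminus_neq_0, Hxa.
apply drift_ratio_ge; nra.
Qed.

Lemma Re_iter_psi_ge (x : C) (n : nat) :
  1/2 < Re x -> Re x + INR n * drift a <= Re (iter_fun (psi a) n x).
Proof.
intros Hx. pose proof drift_pos.
induction n as [|n IH]; simpl iter_fun.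
- simpl. lra.
- rewrite S_INR. pose proof (pos_INR n).
  apply Rle_trans with (Re (iter_fun (psi a) n x) + drift a); [lra|].
  apply Re_psi_ge. nra.
Qed.

Lemma iter_phi_conj (x : C) (n : nat) : 1/2 < Re x ->
  iter_fun (phi a) n (1 - / x)%C = (1 - / iter_fun (psi a) n x)%C.
Proof.
intros Hx. pose proof drift_pos.
induction n as [|n IH]; [reflexivity|].
simpl iter_fun. rewrite IH.
assert (Hn := Re_iter_psi_ge x n Hx). pose proof (pos_INR n).
destruct (half_plane_avoids (iter_fun (psi a) n x)) as [Hx0 Hxa]; [nra|].
apply phi_conj_psi; assumption.
Qed.

Lemma Cmod_iter_phi_sub_1_le (z : C) (n : nat) : Cmod z < 1 -> (0 < n)%nat ->
  Cmod (iter_fun (phi a) n z - 1)%C <= / (INR n * drift a).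
Proof.
intros Hz Hn. pose proof drift_pos.
set (x := (/ (1 - z))%C).
assert (Hx : 1/2 < Re x) by exact (Re_inv_one_sub_gt_half z Hz).
assert (Hz1 : (1 - z)%C <> 0%C) by (intros Hz0; unfold x in Hx; rewrite Hz0 in Hx; simpl in Hx; lra).
assert (Hzx : z = (1 - / x)%C) by (unfold x; field; exact Hz1).
assert (Hxn := Re_iter_psi_ge x n Hx).
assert (Hn0 : 0 < INR n) by (apply lt_0_INR; exact Hn).
rewrite Hzx, iter_phi_conj by exact Hx.
replace (1 - / iter_fun (psi a) n x - 1)%C with (- / iter_fun (psi a) n x)%C by ring.
rewrite Cmod_opp.
eapply Rle_trans; [apply Cmod_inv_le_inv_Re; nra|].
apply Rinv_le_contravar; nra.
Qed.

End Drift.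

Theorem mainTheorem3 (a : C) :
  Cmod (a - RtoC (1/4))%C < 1/4 ->
  forall eps : R, 0 < eps ->
  exists N : nat, forall n : nat, (N <= n)%nat ->
    forall z : C, Cmod z < 1 -> Cmod (iter_fun (phi a) n z - 1)%C <= eps.
Proof.
intros Hlt eps Heps.
assert (Ha : Cmod a ^ 2 < Re a / 2) by (pose proof (Cmod_sub_RtoC_lt_sq a _ Hlt); lra).
pose proof (drift_pos a Ha) as Hdelta.
destruct (archimed_cor1 (eps * drift a)) as [N [HN HN0]]; [nra|].
exists N. intros n Hn z Hz.
assert (HNn : INR N <= INR n) by (apply le_INR; exact Hn).
assert (HN1 : 0 < INR N) by (apply lt_0_INR; exact HN0).
eapply Rle_trans; [apply (Cmod_iter_phi_sub_1_le a Ha z n Hz); lia|].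
apply Rle_trans with (/ (INR N * drift a)); [apply Rinv_le_contravar; nra|].
rewrite Rinv_mult. apply Rlt_le.
apply Rmult_lt_reg_r with (drift a); [lra|].
rewrite Rmult_assoc, Rinv_l by lra. lra.
Qed.
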